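(* Consider the Weakener algorithm (described in the context) for $n \ge 3$ processes $p_0,\dots,p_{n-1}$. If the registers $R_1[j]$, $R_2[j]$, $C_1[j]$ ($j \ge 0$) used by the algorithm are linearizable but not strongly linearizable, then a strong adversary can construct a run of the algorithm in which all the processes execute infinitely many rounds, and therefore never reach a return statement.
   Context: Model: an asynchronous shared-memory system of $n\ge 3$ processes $p_0,\dots,p_{n-1}$ that may fail by crashing. A process is correct if it takes infinitely many steps. After returning from the algorithm, a process takes no-op steps forever. A strong adversary is a scheduler that sees the entire history so far, including the results of all coin flips made so far, and chooses adaptively which process takes the next step. A ''linearizable [strongly linearizable] register'' means an implemented register whose implementation is linearizable [strongly linearizable]. Linearizability: every operation appears to take effect instantaneously at some point between its invocation and its response, i.e., each history has a linearization (a sequential history consistent with the real-time order of non-overlapping operations and with the sequential specification). Strong linearizability: a set of histories $\mathcal{H}$ is strongly linearizable if there is a function $f$ from the prefix-closure of $\mathcal{H}$ to sequential histories such that (L) for every $H$ in the prefix-closure, $f(H)$ is a linearization of $H$, and (P) whenever $G$ is a prefix of $H$ (both in the prefix-closure), $f(G)$ is a prefix of $f(H)$. Weakener algorithm. Shared registers, for each $j = 0,1,2,\dots$: $R_1[j]$, a multi-writer multi-reader register initialized to $\bot$; $C_1[j]$, a register written only by $p_0$, initialized to $-1$; $R_2[j]$, a register initialized to $\textsc{false}$. Code of $p_i$ for $i \in \{0,1\}$: for rounds $j=0,1,2,\dots$: (Phase 1) write $i$ into $R_1[j]$; if $i=0$, flip a fair coin (outcome in $\{0,1\}$) and write the outcome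 into $C_1[j]$; (Phase 2) read $R_2[j]$ into local variable $v_1$; if $v_1 = \textsc{false}$, exit the for loop. After the loop: return. Code of $p_i$ for $i \in \{2,\dots,n-1\}$: for rounds $j=0,1,2,\dots$: (Phase 1) read $R_1[j]$ into $u_1$; read $R_1[j]$ into $u_2$; read $C_1[j]$ into $c_1$; if $u_1 \ne c_1$ or $u_2 \ne 1-c_1$, exit the for loop; (Phase 2) write $\textsc{true}$ into $R_2[j]$. After the loop: return. *)

From Stdlib Require Import List ZArith Arith Lia.
Import ListNotations.

Inductive regkind := KR1 | KC1 | KR2.
Definition reg : Type := (regkind * nat)%type.

Inductive value := VBot | VInt (z : Z) | VBool (b : bool).
Inductive op := ORead | OWrite (v : value).
Inductive resp := RAck | RVal (v : value).

Inductive event :=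
| Inv (p : nat) (r : reg) (o : op)
| Resp (p : nat) (r : reg) (x : resp).

Lemma regkind_eq_dec (a b : regkind) : {a = b} + {a <> b}.
Proof. decide equality. Defined.
Lemma reg_eq_dec (a b : reg) : {a = b} + {a <> b}.
Proof. decide equality; [apply Nat.eq_dec | apply regkind_eq_dec]. Defined.
Lemma value_eq_dec (a b : value) : {a = b} + {a <> b}.
Proof. decide equality; [apply Z.eq_dec | apply Bool.bool_dec]. Defined.

Definition ev_proc (e : event) : nat :=
  match e with Inv p _ _ | Resp p _ _ => p end.
Definition ev_reg (e : event) : reg :=
  match e with Inv _ r _ | Resp _ r _ => r end.

Definition init_val (r : reg) : value :=
  match fst r with
  | KR1 => VBot
  | KC1 => VInt (-1)
  | KR2 => VBool false
  end.

Fixpoint seq_legal (v : value) (s : list (op * resp)) : Prop :=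
  match s with
  | [] => True
  | (ORead, x) :: s' => x = RVal v /\ seq_legal v s'
  | (OWrite w, x) :: s' => x = RAck /\ seq_legal w s'
  end.

(* An operation is identified by the index of its invocation event. *)
Definition inv_at (h : list event) (i : nat) (p : nat) (o : op) : Prop :=
  exists r, nth_error h i = Some (Inv p r o).

Definition resp_of (h : list event) (i k : nat) (x : resp) : Prop :=
  exists p o r, inv_at h i p o /\ i < k /\
    nth_error h k = Some (Resp p r x) /\
    (forall m e, i < m < k -> nth_error h m = Some e -> ev_proc e <> p).

Definition precedes (S : list (nat * (op * resp))) (i1 i2 : nat) : Prop :=
  exists S1 S2, S = S1 ++ S2 /\ In i1 (map fst S1) /\ In i2 (map fst S2).

(* S is a linearization of h (history of one register with initial value v0):
   a sequential history containing every completed operation with its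
   response, and possibly some pending operations with chosen responses,
   respecting real-time order and the sequential specification. *)
Definition linearization (v0 : value) (h : list event)
    (S : list (nat * (op * resp))) : Prop :=
  NoDup (map fst S) /\
  (forall i o x, In (i, (o, x)) S -> exists p, inv_at h i p o) /\
  (forall i k x, resp_of h i k x -> exists o, In (i, (o, x)) S) /\
  (forall i1 k1 x1 i2, resp_of h i1 k1 x1 -> k1 < i2 ->
       In i2 (map fst S) -> precedes S i1 i2) /\
  seq_legal v0 (map snd S).

Definition linearizable (v0 : value) (h : list event) : Prop :=
  exists S, linearization v0 h S.

Definition proj (r : reg) (h : list event) : list event :=
  filter (fun e => if reg_eq_dec (ev_reg e) r then true else false) h.

Definition regs_linearizable (h : list event) : Prop :=
  forall r : reg, linearizable (init_val r) (proj r h).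

Inductive pc :=
| PW_R1 (j : nat)
| PW_Flip (j : nat)
| PW_C1 (j : nat) (c : Z)
| PW_R2 (j : nat)
| PR_1 (j : nat)
| PR_2 (j : nat) (u1 : value)
| PR_C (j : nat) (u1 u2 : value)
| PR_W (j : nat)
| PDone.

Inductive pstate := Ready (c : pc) | Pending (c : pc).

Definition round_of_pc (c : pc) : option nat :=
  match c with
  | PW_R1 j | PW_Flip j | PW_C1 j _ | PW_R2 j
  | PR_1 j | PR_2 j _ | PR_C j _ _ | PR_W j => Some j
  | PDone => None
  end.

Definition round_of (s : pstate) : option nat :=
  match s with Ready c | Pending c => round_of_pc c end.

Definition inv_of (p : nat) (c : pc) : option (reg * op) :=
  match c with
  | PW_R1 j => Some ((KR1, j), OWrite (VInt (Z.of_nat p)))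
  | PW_Flip _ => None
  | PW_C1 j z => Some ((KC1, j), OWrite (VInt z))
  | PW_R2 j => Some ((KR2, j), ORead)
  | PR_1 j => Some ((KR1, j), ORead)
  | PR_2 j _ => Some ((KR1, j), ORead)
  | PR_C j _ _ => Some ((KC1, j), ORead)
  | PR_W j => Some ((KR2, j), OWrite (VBool true))
  | PDone => None
  end.

Definition val_of (x : resp) : value :=
  match x with RVal v => v | RAck => VBot end.

Definition reader_exits (u1 u2 c1 : value) : bool :=
  (if value_eq_dec u1 c1 then false else true) ||
  match c1 with
  | VInt z => if value_eq_dec u2 (VInt (1 - z)) then false else true
  | _ => true
  end.

Definition next (p : nat) (c : pc) (x : resp) : pc :=
  match c with
  | PW_R1 j => if Nat.eqb p 0 then PW_Flip j else PW_R2 j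
  | PW_C1 j _ => PW_R2 j
  | PW_R2 j =>
      match x with RVal (VBool false) => PDone | _ => PW_R1 (S j) end
  | PR_1 j => PR_2 j (val_of x)
  | PR_2 j u1 => PR_C j u1 (val_of x)
  | PR_C j u1 u2 => if reader_exits u1 u2 (val_of x) then PDone else PR_W j
  | PR_W j => PR_1 (S j)
  | PW_Flip _ | PDone => c
  end.

Record config := mkConfig {
  pst : nat -> pstate;
  hist : list event;
  nflips : nat
}.

Definition init_pc (i : nat) : pc := if Nat.leb i 1 then PW_R1 0 else PR_1 0.
Definition init_config : config := mkConfig (fun i => Ready (init_pc i)) [] 0.

Definition upd (f : nat -> pstate) (p : nat) (s : pstate) : nat -> pstate :=
  fun q => if Nat.eqb q p then s else f q.

(* Pending:
   the operation responds with x (the response is chosen by the adversary;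
   legitimacy is enforced by requiring the history to stay linearizable). *)
Definition step (coins : nat -> bool) (cf : config) (ch : nat * resp) : config :=
  let (p, x) := ch in
  match pst cf p with
  | Ready (PW_Flip j) =>
      mkConfig (upd (pst cf) p
                  (Ready (PW_C1 j (if coins (nflips cf) then 1%Z else 0%Z))))
               (hist cf) (S (nflips cf))
  | Ready c =>
      match inv_of p c with
      | Some (r, o) => mkConfig (upd (pst cf) p (Pending c))
                                (hist cf ++ [Inv p r o]) (nflips cf)
      | None => cf
      end
  | Pending c =>
      match inv_of p c with
      | Some (r, o) => mkConfig (upd (pst cf) p (Ready (next p c x)))
                                (hist cf ++ [Resp p r x]) (nflips cf)
      | None => cf
      end
  end.

(* A strong adversary sees the whole run so far (all configurations, hence
   all coin outcomes so far) and picks the next process to step, together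
   with the response value for a pending operation. *)
Definition adversary : Type := list config -> nat * resp.

(* the run so far, most recent configuration first *)
Fixpoint trace (adv : adversary) (coins : nat -> bool) (t : nat) : list config :=
  match t with
  | 0 => [init_config]
  | S t' => let tr := trace adv coins t' in
            step coins (hd init_config tr) (adv tr) :: tr
  end.

Definition cfg_at (adv : adversary) (coins : nat -> bool) (t : nat) : config :=
  hd init_config (trace adv coins t).

From Stdlib Require Import List ZArith Arith Lia Bool.
Import ListNotations.

(* In round j the adversary lets p_0 and p_1 invoke their writes to R_1[j] and
   every reader invoke its first read of R_1[j]. Then p_0's write returns and
   p_0 flips the coin c, p_1's write returns, and p_0 invokes its write of c to
   C_1[j]. Only now do the readers go on, one after the other: the first read
   returns c, the second 1 - c and the read of C_1[j] returns c, so each reader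
   writes true into R_2[j]; finally p_0 and p_1 read true from R_2[j] and start
   round j + 1. The history of R_1[j] is linearizable as: the write of p_c, the
   first reads, the write of p_(1-c), the second reads, which is possible since
   the first reads were invoked before p_0's write returned. This order depends
   on a coin flipped after that write returned, which is exactly what strong
   linearizability rules out. Linearizability of every prefix of the run is
   witnessed by annotating it with linearization points. *)

Local Notation occ l x := (count_occ Nat.eq_dec l x).

(** * Linearizability from annotated histories *)

Lemma op_eq_dec (a b : op) : {a = b} + {a <> b}.
Proof. decide equality; apply value_eq_dec. Defined.

Lemma resp_eq_dec (a b : resp) : {a = b} + {a <> b}.
Proof. decide equality; apply value_eq_dec. Defined.

Lemma seq_legal_app_l v l1 l2 : seq_legal v (l1 ++ l2) -> seq_legal v l1.
Proof.
  revert v; induction l1 as [|[[|w] x] l1 IH]; intros v; simpl; try tauto.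
  - intros [Hx H]; eauto.
  - intros [Hx H]; eauto.
Qed.

Lemma nth_error_snoc {A} (h : list A) e k x :
  nth_error (h ++ [e]) k = Some x ->
  (k < length h /\ nth_error h k = Some x) \/ (k = length h /\ x = e).
Proof.
  intros Hk. destruct (Nat.lt_ge_cases k (length h)) as [Hlt|Hge].
  - left. rewrite nth_error_app1 in Hk; auto.
  - right. rewrite nth_error_app2 in Hk by lia.
    destruct (k - length h) as [|m] eqn:E; simpl in Hk.
    + split; [lia|congruence].
    + destruct m; discriminate.
Qed.

Lemma nth_error_snoc_last {A} (h : list A) e : nth_error (h ++ [e]) (length h) = Some e.
Proof. rewrite nth_error_app2, Nat.sub_diag; reflexivity. Qed.

Lemma inv_at_snoc h e i p o : inv_at h i p o -> inv_at (h ++ [e]) i p o.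
Proof.
  intros [r Hr]. exists r. rewrite nth_error_app1; auto.
  apply nth_error_Some; congruence.
Qed.

Lemma resp_of_snoc h e i k x :
  resp_of (h ++ [e]) i k x -> k < length h -> resp_of h i k x.
Proof.
  intros (p & o & r & [r' Hinv] & Hik & Hk & Hm) Hkl.
  exists p, o, r. repeat split; auto.
  - exists r'. rewrite nth_error_app1 in Hinv by lia. auto.
  - rewrite nth_error_app1 in Hk; auto.
  - intros m e' Hm' He'. apply (Hm m e'); auto. rewrite nth_error_app1; auto; lia.
Qed.

Definition pending (h : list event) (p i : nat) (o : op) : Prop :=
  inv_at h i p o /\ forall m e, i < m -> nth_error h m = Some e -> ev_proc e <> p.

Lemma pending_snoc_other h e p i o :
  pending h p i o -> ev_proc e <> p -> pending (h ++ [e]) p i o.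
Proof.
  intros [Hi Hm] He. split; [apply inv_at_snoc; auto|].
  intros m e' Hlt He'. apply nth_error_snoc in He' as [[Hml He']|[_ ->]]; eauto.
Qed.

Lemma linearization_index v0 h S i :
  linearization v0 h S -> In i (map fst S) -> i < length h.
Proof.
  intros (_ & Hinv & _) Hi. apply in_map_iff in Hi as [[i' [o x]] [<- Hin]].
  destruct (Hinv _ _ _ Hin) as [p [r Hr]]. apply nth_error_Some. simpl. congruence.
Qed.

Lemma linearization_snoc_inv v0 h S q r o :
  linearization v0 h S -> linearization v0 (h ++ [Inv q r o]) S.
Proof.
  intros (Hnd & Hinv & Hresp & Hrt & Hleg).
  assert (Hold : forall i k x, resp_of (h ++ [Inv q r o]) i k x -> resp_of h i k x).
  { intros i k x Hr. apply resp_of_snoc with (Inv q r o); auto.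
    destruct Hr as (p & o' & r' & _ & _ & Hk & _).
    apply nth_error_snoc in Hk as [[Hk _]|[_ Hk]]; [auto|discriminate]. }
  repeat split; eauto.
  intros i o' x Hin. destruct (Hinv _ _ _ Hin) as [p Hp]. exists p. apply inv_at_snoc; auto.
Qed.

Lemma linearization_snoc_resp v0 h S q r i o x :
  linearization v0 h S -> pending h q i o -> In (i, (o, x)) S ->
  linearization v0 (h ++ [Resp q r x]) S.
Proof.
  intros HL [[r0 Hi] Hpend] HiS. pose proof HL as (Hnd & Hinv & Hresp & Hrt & Hleg).
  repeat split; auto.
  - intros i' o' x' Hin. destruct (Hinv _ _ _ Hin) as [p Hp]. exists p. apply inv_at_snoc; auto.
  - intros i' k x' Hr. destruct (Nat.lt_ge_cases k (length h)) as [Hlt|Hge].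
    + apply Hresp with k. apply resp_of_snoc with (Resp q r x); auto.
    + destruct Hr as (p & o' & r' & [r'' Hinv'] & Hik & Hk & Hm).
      apply nth_error_snoc in Hk as [[? _]|[-> Hk]]; [lia|]. injection Hk as -> -> ->.
      rewrite nth_error_app1 in Hinv' by lia.
      assert (Hil : i < length h) by (apply nth_error_Some; congruence).
      assert (i' = i) as ->.
      { destruct (Nat.lt_trichotomy i' i) as [Hlt|[Heq|Hgt]]; auto; exfalso.
        - apply (Hm i (Inv q r0 o)); auto. rewrite nth_error_app1; auto.
        - apply (Hpend i' (Inv q r'' o')); auto. }
      eauto.
  - intros i1 k1 x1 i2 Hr Hk1 Hi2. apply Hrt with k1 x1; auto.
    apply resp_of_snoc with (Resp q r x); auto.
    pose proof (linearization_index _ _ _ _ HL Hi2). lia.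
Qed.

Lemma linearization_snoc_op v0 h S i q o x :
  linearization v0 h S -> inv_at h i q o -> ~ In i (map fst S) ->
  seq_legal v0 (map snd S ++ [(o, x)]) -> linearization v0 h (S ++ [(i, (o, x))]).
Proof.
  intros (Hnd & Hinv & Hresp & Hrt & Hleg) Hi Hni Hleg'.
  repeat split.
  - rewrite map_app. apply NoDup_app; auto; [repeat constructor; auto|].
    intros a Ha [<-|[]]. auto.
  - intros i' o' x' Hin. apply in_app_or in Hin as [Hin|[Heq|[]]]; eauto.
    injection Heq as -> -> ->. eauto.
  - intros i' k x' Hr. destruct (Hresp _ _ _ Hr) as [o' Ho']. exists o'. apply in_or_app; auto.
  - intros i1 k1 x1 i2 Hr Hk1 Hi2. rewrite map_app in Hi2.
    apply in_app_or in Hi2 as [Hi2|[<-|[]]].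
    + destruct (Hrt _ _ _ _ Hr Hk1 Hi2) as (S1 & S2 & -> & HA & HB).
      exists S1, (S2 ++ [(i, (o, x))]). rewrite app_assoc, map_app, in_app_iff. auto.
    + destruct (Hresp _ _ _ Hr) as [o' Ho']. exists S, [(i, (o, x))].
      split; auto. split; [apply in_map_iff; exists (i1, (o', x1))|]; simpl; auto.
  - rewrite map_app. auto.
Qed.

(** An annotated history: [Lin p r o x] marks the linearization point of the
    pending operation [o] of [p] on [r], which returns [x]. *)
Inductive item :=
| Ev (e : event)
| Lin (p : nat) (r : reg) (o : op) (x : resp).

Definition erase (a : list item) : list event :=
  flat_map (fun it => match it with Ev e => [e] | Lin _ _ _ _ => [] end) a.

Definition markers (a : list item) : list (op * resp) :=
  flat_map (fun it => match it with Ev _ => [] | Lin _ _ o x => [(o, x)] end) a.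

Definition item_proc (it : item) : nat :=
  match it with Ev e => ev_proc e | Lin p _ _ _ => p end.

Definition item_reg (it : item) : reg :=
  match it with Ev e => ev_reg e | Lin _ r _ _ => r end.

Lemma erase_app a b : erase (a ++ b) = erase a ++ erase b.
Proof. apply flat_map_app. Qed.

Lemma markers_app a b : markers (a ++ b) = markers a ++ markers b.
Proof. apply flat_map_app. Qed.

Inductive opstate := Idle | Invoked (o : op) | Linearized (o : op) (x : resp) | Broken.

Definition opstate_step (p : nat) (s : opstate) (it : item) : opstate :=
  if item_proc it =? p then
    match s, it with
    | Idle, Ev (Inv _ _ o) => Invoked o
    | Invoked o, Lin _ _ o' x => if op_eq_dec o o' then Linearized o x else Broken
    | Linearized _ x, Ev (Resp _ _ x') => if resp_eq_dec x x' then Idle else Broken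
    | _, _ => Broken
    end
  else s.

Definition opstate_from (s : opstate) (p : nat) (a : list item) : opstate :=
  fold_left (opstate_step p) a s.

Definition well_annotated (a : list item) : Prop :=
  forall p, opstate_from Idle p a <> Broken.

Lemma opstate_from_app s p a b :
  opstate_from s p (a ++ b) = opstate_from (opstate_from s p a) p b.
Proof. apply fold_left_app. Qed.

Lemma opstate_snoc p a it :
  opstate_from Idle p (a ++ [it]) = opstate_step p (opstate_from Idle p a) it.
Proof. apply opstate_from_app. Qed.

Lemma opstate_from_Broken p a : opstate_from Broken p a = Broken.
Proof.
  induction a as [|it a IH]; auto. unfold opstate_from in *. simpl.
  replace (opstate_step p Broken it) with Broken; auto.
  unfold opstate_step. destruct (item_proc it =? p); auto.
Qed.

Lemma well_annotated_app_l a b : well_annotated (a ++ b) -> well_annotated a.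
Proof.
  intros H p Hp. apply (H p). rewrite opstate_from_app, Hp. apply opstate_from_Broken.
Qed.

Definition tracked (h : list event) (S : list (nat * (op * resp))) (p : nat)
    (s : opstate) : Prop :=
  match s with
  | Invoked o => exists i, pending h p i o /\ ~ In i (map fst S)
  | Linearized o x => exists i, pending h p i o /\ In (i, (o, x)) S
  | _ => True
  end.

Definition annotation_inv (v0 : value) (a : list item) S : Prop :=
  linearization v0 (erase a) S /\ map snd S = markers a /\
  forall p, tracked (erase a) S p (opstate_from Idle p a).

Lemma tracked_snoc_other h S p s e :
  tracked h S p s -> ev_proc e <> p -> tracked (h ++ [e]) S p s.
Proof.
  intros Ht He. destruct s; simpl in *; auto;
  destruct Ht as (i & Hp & HS); exists i; split; auto; apply pending_snoc_other; auto.
Qed.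

Lemma tracked_add_other h S p s i q o x :
  tracked h S p s -> inv_at h i q o -> q <> p -> tracked h (S ++ [(i, (o, x))]) p s.
Proof.
  intros Ht [r Hr] Hqp. destruct s; simpl in *; auto;
  destruct Ht as (i' & Hp & HS); exists i'; split; auto.
  - rewrite map_app, in_app_iff. intros [|[<-|[]]]; auto.
    destruct Hp as [[r' Hr'] _]. simpl in *. congruence.
  - apply in_or_app; auto.
Qed.

Lemma annotation_inv_inv v0 a S q r o :
  annotation_inv v0 a S -> opstate_from Idle q a = Idle ->
  annotation_inv v0 (a ++ [Ev (Inv q r o)]) S.
Proof.
  intros (HL & HS & Ht) Hq. unfold annotation_inv.
  rewrite erase_app, markers_app, app_nil_r. simpl.
  split; [apply linearization_snoc_inv; auto|split; [auto|]].
  intros p. rewrite opstate_snoc. unfold opstate_step. simpl.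
  destruct (Nat.eqb_spec q p) as [<-|Hqp]; [|apply tracked_snoc_other; auto].
  rewrite Hq. exists (length (erase a)). split; [split|].
  - exists r. apply nth_error_snoc_last.
  - intros m e Hm He. apply nth_error_snoc in He as [[]|[]]; lia.
  - intros Hin. pose proof (linearization_index _ _ _ _ HL Hin). lia.
Qed.

Lemma annotation_inv_resp v0 a S q r o x :
  annotation_inv v0 a S -> opstate_from Idle q a = Linearized o x ->
  annotation_inv v0 (a ++ [Ev (Resp q r x)]) S.
Proof.
  intros (HL & HS & Ht) Hq. unfold annotation_inv.
  rewrite erase_app, markers_app, app_nil_r. simpl.
  pose proof (Ht q) as Htq. rewrite Hq in Htq. destruct Htq as (i & Hi & HiS).
  split; [eapply linearization_snoc_resp; eauto|split; [auto|]].
  intros p. rewrite opstate_snoc. unfold opstate_step. simpl.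
  destruct (Nat.eqb_spec q p) as [<-|Hqp]; [|apply tracked_snoc_other; auto].
  rewrite Hq. destruct (resp_eq_dec x x); [exact I|congruence].
Qed.

Lemma annotation_inv_lin v0 a S q r o x :
  annotation_inv v0 a S -> opstate_from Idle q a = Invoked o ->
  seq_legal v0 (markers a ++ [(o, x)]) ->
  exists S', annotation_inv v0 (a ++ [Lin q r o x]) S'.
Proof.
  intros (HL & HS & Ht) Hq Hleg.
  pose proof (Ht q) as Htq. rewrite Hq in Htq. destruct Htq as (i & Hi & HiS).
  exists (S ++ [(i, (o, x))]). unfold annotation_inv.
  rewrite erase_app, markers_app, app_nil_r, map_app, HS. simpl.
  split; [apply linearization_snoc_op with q; [apply HL|apply Hi|auto|congruence]|split; [auto|]].
  intros p. rewrite opstate_snoc. unfold opstate_step. simpl.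
  destruct (Nat.eqb_spec q p) as [<-|Hqp]; [|eapply tracked_add_other; eauto; apply Hi].
  rewrite Hq. destruct (op_eq_dec o o); [|congruence].
  exists i. split; auto. apply in_or_app. simpl. auto.
Qed.

Lemma annotation_inv_exists v0 a :
  well_annotated a -> seq_legal v0 (markers a) -> exists S, annotation_inv v0 a S.
Proof.
  induction a as [|it a IH] using rev_ind; intros Hwf Hleg.
  - exists []. split; [|split; [reflexivity|intros; exact I]].
    split; [constructor|split; [|split; [|split]]]; simpl; auto.
    + intros i o x [].
    + intros i k x (p & o & r & _ & _ & Hk & _). destruct k; discriminate.
    + intros i1 k1 x1 i2 _ _ [].
  - rewrite markers_app in Hleg.
    destruct IH as [S HS]; [eapply well_annotated_app_l; eauto|eapply seq_legal_app_l; eauto|].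
    specialize (Hwf (item_proc it)). rewrite opstate_snoc in Hwf.
    unfold opstate_step in Hwf. rewrite Nat.eqb_refl in Hwf.
    destruct it as [[q r o|q r x]|q r o x]; simpl in Hwf;
      destruct (opstate_from Idle q a) as [|o'|o' x'|] eqn:Hq; try congruence.
    + eexists. apply annotation_inv_inv; eauto.
    + destruct (resp_eq_dec x' x) as [<-|]; [|congruence].
      eexists. eapply annotation_inv_resp; eauto.
    + destruct (op_eq_dec o' o) as [<-|]; [|congruence].
      eapply annotation_inv_lin; eauto.
Qed.

Lemma linearizable_erase v0 a :
  well_annotated a -> seq_legal v0 (markers a) -> linearizable v0 (erase a).
Proof.
  intros Hwf Hleg. destruct (annotation_inv_exists v0 a Hwf Hleg) as (S & HL & _). exists S. auto.
Qed.

(** * The adversary and its run *)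

Definition coin_val (b : bool) : Z := if b then 1%Z else 0%Z.

Definition readers (n : nat) : list nat := seq 2 (n - 2).

(** The local state of [p] after its first [s] steps in round [j], where [b] is
    the coin [p_0] flips in that round. *)
Definition round_state (p j : nat) (b : bool) (s : nat) : pstate :=
  match p with
  | 0 => match s with
         | 0 => Ready (PW_R1 j) | 1 => Pending (PW_R1 j) | 2 => Ready (PW_Flip j)
         | 3 => Ready (PW_C1 j (coin_val b)) | 4 => Pending (PW_C1 j (coin_val b))
         | 5 => Ready (PW_R2 j) | 6 => Pending (PW_R2 j) | _ => Ready (PW_R1 (S j))
         end
  | 1 => match s with
         | 0 => Ready (PW_R1 j) | 1 => Pending (PW_R1 j) | 2 => Ready (PW_R2 j)
         | 3 => Pending (PW_R2 j) | _ => Ready (PW_R1 (S j))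
         end
  | _ => match s with
         | 0 => Ready (PR_1 j) | 1 => Pending (PR_1 j)
         | 2 => Ready (PR_2 j (VInt (coin_val b)))
         | 3 => Pending (PR_2 j (VInt (coin_val b)))
         | 4 => Ready (PR_C j (VInt (coin_val b)) (VInt (1 - coin_val b)))
         | 5 => Pending (PR_C j (VInt (coin_val b)) (VInt (1 - coin_val b)))
         | 6 => Ready (PR_W j) | 7 => Pending (PR_W j) | _ => Ready (PR_1 (S j))
         end
  end.

Definition round_steps (p : nat) : nat := match p with 0 => 7 | 1 => 4 | _ => 8 end.

Definition pending_coin (cf : config) : Z :=
  match pst cf 0 with Pending (PW_C1 _ z) => z | _ => 0%Z end.

Definition adv_response (cf : config) (p : nat) : resp :=
  match pst cf p with
  | Pending (PR_1 _) => RVal (VInt (pending_coin cf))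
  | Pending (PR_2 _ (VInt z)) => RVal (VInt (1 - z))
  | Pending (PR_C _ u _) => RVal u
  | Pending (PW_R2 _) => RVal (VBool true)
  | _ => RAck
  end.

Definition opening (n : nat) : list nat := [0; 1] ++ readers n ++ [0; 0; 1; 0].
Definition reader_blocks (n : nat) : list nat := flat_map (fun r => repeat r 7) (readers n).
Definition closing : list nat := [0; 0; 0; 1; 1].
Definition round_sched (n : nat) : list nat := opening n ++ reader_blocks n ++ closing.
Definition period (n : nat) : nat := length (round_sched n).
Definition sched (n t : nat) : nat := nth (t mod period n) (round_sched n) 0.

Definition adv (n : nat) : adversary :=
  fun tr => let p := sched n (length tr - 1) in (p, adv_response (hd init_config tr) p).

(** The order of the two writes depends on the coin [b], which [p_0] flips only
    after its own write has returned. *)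
Definition r1_lin (n j : nat) (b : bool) : list item :=
  let w0 := Lin 0 (KR1, j) (OWrite (VInt 0)) RAck in
  let w1 := Lin 1 (KR1, j) (OWrite (VInt 1)) RAck in
  let rd := flat_map (fun r => [Lin r (KR1, j) ORead (RVal (VInt (coin_val b)))]) (readers n) in
  if b then [w1] ++ rd ++ [w0] else [w0] ++ rd ++ [w1].

Definition p0_ann (n j : nat) (b : bool) (s : nat) : list item :=
  match s with
  | 0 => [Ev (Inv 0 (KR1, j) (OWrite (VInt 0)))]
  | 1 => r1_lin n j b ++ [Ev (Resp 0 (KR1, j) RAck)]
  | 3 => [Ev (Inv 0 (KC1, j) (OWrite (VInt (coin_val b))));
          Lin 0 (KC1, j) (OWrite (VInt (coin_val b))) RAck]
  | 4 => [Ev (Resp 0 (KC1, j) RAck)]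
  | 5 => [Ev (Inv 0 (KR2, j) ORead); Lin 0 (KR2, j) ORead (RVal (VBool true))]
  | 6 => [Ev (Resp 0 (KR2, j) (RVal (VBool true)))]
  | _ => []
  end.

Definition p1_ann (j s : nat) : list item :=
  match s with
  | 0 => [Ev (Inv 1 (KR1, j) (OWrite (VInt 1)))]
  | 1 => [Ev (Resp 1 (KR1, j) RAck)]
  | 2 => [Ev (Inv 1 (KR2, j) ORead); Lin 1 (KR2, j) ORead (RVal (VBool true))]
  | 3 => [Ev (Resp 1 (KR2, j) (RVal (VBool true)))]
  | _ => []
  end.

Definition reader_ann (r j : nat) (b : bool) (s : nat) : list item :=
  match s with
  | 0 => [Ev (Inv r (KR1, j) ORead)]
  | 1 => [Ev (Resp r (KR1, j) (RVal (VInt (coin_val b))))]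
  | 2 => [Ev (Inv r (KR1, j) ORead); Lin r (KR1, j) ORead (RVal (VInt (1 - coin_val b)))]
  | 3 => [Ev (Resp r (KR1, j) (RVal (VInt (1 - coin_val b))))]
  | 4 => [Ev (Inv r (KC1, j) ORead); Lin r (KC1, j) ORead (RVal (VInt (coin_val b)))]
  | 5 => [Ev (Resp r (KC1, j) (RVal (VInt (coin_val b))))]
  | 6 => [Ev (Inv r (KR2, j) (OWrite (VBool true)));
          Lin r (KR2, j) (OWrite (VBool true)) RAck]
  | 7 => [Ev (Resp r (KR2, j) RAck)]
  | _ => []
  end.

Definition step_ann (n p j : nat) (b : bool) (s : nat) : list item :=
  match p with 0 => p0_ann n j b s | 1 => p1_ann j s | _ => reader_ann p j b s end.

Fixpoint sched_ann (n j : nat) (b : bool) (pre l : list nat) : list item :=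
  match l with
  | [] => []
  | p :: l' => step_ann n p j b (occ pre p) ++ sched_ann n j b (pre ++ [p]) l'
  end.

Definition round_ann (n j : nat) (b : bool) : list item := sched_ann n j b [] (round_sched n).

Fixpoint run_ann (n : nat) (coins : nat -> bool) (j : nat) : list item :=
  match j with 0 => [] | S j' => run_ann n coins j' ++ round_ann n j' (coins j') end.

Lemma erase_r1_lin n j b : erase (r1_lin n j b) = [].
Proof.
  assert (Hrd : forall l (v : value),
             erase (flat_map (fun r => [Lin r (KR1, j) ORead (RVal v)]) l) = []).
  { intros l v. induction l as [|r l IH]; auto. }
  unfold r1_lin. destruct b; simpl; rewrite erase_app, Hrd; reflexivity.
Qed.

Lemma step_round_state n coins cf p j b s :
  pst cf p = round_state p j b s -> s < round_steps p ->
  (2 <= p -> s = 1 -> pst cf 0 = round_state 0 j b 4) ->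
  (p = 0 -> s = 2 -> coins (nflips cf) = b) ->
  step coins cf (p, adv_response cf p) =
    mkConfig (upd (pst cf) p (round_state p j b (S s)))
             (hist cf ++ erase (step_ann n p j b s))
             (if (p =? 0) && (s =? 2) then S (nflips cf) else nflips cf).
Proof.
  intros Hst Hs Hcoin Hflip. unfold step, adv_response.
  destruct p as [|[|p']]; simpl in Hs.
  - destruct s as [|[|[|[|[|[|[|s]]]]]]]; [..|lia]; rewrite Hst; simpl;
      try rewrite (Hflip eq_refl eq_refl); rewrite ?erase_app, ?erase_r1_lin, ?app_nil_r;
      reflexivity.
  - destruct s as [|[|[|[|s]]]]; [..|lia]; rewrite Hst; reflexivity.
  - destruct s as [|[|[|[|[|[|[|[|s]]]]]]]]; [..|lia]; rewrite Hst; simpl; try reflexivity.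
    + unfold pending_coin. rewrite Hcoin by lia. reflexivity.
    + destruct b; reflexivity.
Qed.

Lemma readers_spec n r : In r (readers n) <-> 2 <= r < n.
Proof. unfold readers. rewrite in_seq. lia. Qed.

Lemma occ_readers n r : occ (readers n) r = if (2 <=? r) && (r <? n) then 1 else 0.
Proof.
  destruct (Nat.leb_spec 2 r), (Nat.ltb_spec r n); simpl.
  - apply NoDup_count_occ'; [apply seq_NoDup|apply readers_spec; lia].
  - apply count_occ_not_In. rewrite readers_spec. lia.
  - apply count_occ_not_In. rewrite readers_spec. lia.
  - apply count_occ_not_In. rewrite readers_spec. lia.
Qed.

Lemma occ_repeat_blocks l r : occ (flat_map (fun r' => repeat r' 7) l) r = 7 * occ l r.
Proof.
  induction l as [|r' l IH]; auto. cbn [flat_map]. rewrite count_occ_app, IH.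
  destruct (Nat.eq_dec r' r) as [->|Hne].
  - rewrite count_occ_repeat_eq, count_occ_cons_eq; lia.
  - rewrite count_occ_repeat_neq, count_occ_cons_neq; auto.
Qed.

Lemma occ_round_sched n r : r < n -> occ (round_sched n) r = round_steps r.
Proof.
  intros Hr. unfold round_sched, opening, reader_blocks, closing.
  rewrite !count_occ_app, occ_repeat_blocks, occ_readers.
  destruct r as [|[|r]]; simpl; auto.
  destruct (Nat.ltb_spec (S (S r)) n); [lia|lia].
Qed.

Lemma sched_lt n k : 2 <= n -> nth k (round_sched n) 0 < n.
Proof.
  intros Hn. destruct (nth_in_or_default k (round_sched n) 0) as [Hin| ->]; [|lia].
  revert Hin. generalize (nth k (round_sched n) 0). intros p Hin.
  unfold round_sched, opening, reader_blocks, closing in Hin.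
  rewrite !in_app_iff, in_flat_map in Hin.
  destruct Hin as [[Hin|[Hin|Hin]]|[(r & Hr & Hin)|Hin]].
  - simpl in Hin. lia.
  - apply readers_spec in Hin. lia.
  - simpl in Hin. lia.
  - apply repeat_spec in Hin. apply readers_spec in Hr. lia.
  - simpl in Hin. lia.
Qed.

Lemma firstn_S_nth (l : list nat) k : k < length l -> firstn (S k) l = firstn k l ++ [nth k l 0].
Proof.
  revert k; induction l as [|a l IH]; intros k Hk; simpl in *; [lia|].
  destruct k; simpl; auto. rewrite IH by lia. reflexivity.
Qed.

Lemma occ_firstn_S (l : list nat) k x : k < length l ->
  occ (firstn (S k) l) x = occ (firstn k l) x + (if Nat.eq_dec (nth k l 0) x then 1 else 0).
Proof.
  intros Hk. rewrite firstn_S_nth, count_occ_app by auto. simpl.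
  destruct (Nat.eq_dec (nth k l 0) x); lia.
Qed.

Lemma occ_firstn_le (l : list nat) k x : occ (firstn k l) x <= occ l x.
Proof. rewrite <- (firstn_skipn k l) at 2. rewrite count_occ_app. lia. Qed.

(** A reader's first read returns only after [p_0] has invoked its write of the coin. *)
Lemma occ_p0_at_reader_return n k :
  k < period n -> 2 <= nth k (round_sched n) 0 ->
  occ (firstn k (round_sched n)) (nth k (round_sched n) 0) = 1 ->
  occ (firstn k (round_sched n)) 0 = 4.
Proof.
  unfold period, round_sched. rewrite !length_app.
  set (A := opening n). set (B := reader_blocks n) in *. intros Hk Hr Hocc.
  destruct (Nat.lt_ge_cases k (length A)) as [HA|HA].
  - exfalso. rewrite app_nth1 in Hr, Hocc by auto.
    rewrite firstn_app, (proj2 (Nat.sub_0_le k (length A))), firstn_O, app_nil_r in Hocc by lia.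
    set (r := nth k A 0) in *.
    assert (HAr : occ A r <= 1).
    { subst A. unfold opening. rewrite !count_occ_app, occ_readers.
      destruct r as [|[|r']]; [lia|lia|]. simpl.
      destruct (S (S r') <? n); lia. }
    pose proof (occ_firstn_S A k r HA) as HS. pose proof (occ_firstn_le A (S k) r).
    fold r in HS. destruct (Nat.eq_dec r r); lia.
  - destruct (Nat.lt_ge_cases k (length A + length B)) as [HB|HB].
    + rewrite firstn_app, firstn_all2, count_occ_app by lia.
      rewrite firstn_app, count_occ_app, (proj2 (Nat.sub_0_le (k - length A) (length B))),
        firstn_O by lia.
      pose proof (occ_firstn_le B (k - length A) 0).
      assert (occ B 0 = 0)
        by (subst B; unfold reader_blocks; rewrite occ_repeat_blocks, occ_readers; reflexivity).
      assert (occ A 0 = 4)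
        by (subst A; unfold opening; rewrite !count_occ_app, occ_readers; reflexivity).
      change (occ [] 0) with 0. lia.
    + exfalso. rewrite !app_nth2 in Hr by lia. unfold closing in Hr.
      destruct (k - length A - length B) as [|[|[|[|[|[]]]]]]; simpl in Hr; lia.
Qed.

Lemma sched_ann_app n j b l1 : forall pre l2,
  sched_ann n j b pre (l1 ++ l2) = sched_ann n j b pre l1 ++ sched_ann n j b (pre ++ l1) l2.
Proof.
  induction l1 as [|p l1 IH]; intros pre l2; simpl.
  - rewrite app_nil_r. reflexivity.
  - rewrite IH, <- !app_assoc. reflexivity.
Qed.

Lemma sched_ann_snoc n j b pre l p :
  sched_ann n j b pre (l ++ [p]) = sched_ann n j b pre l ++ step_ann n p j b (occ (pre ++ l) p).
Proof. rewrite sched_ann_app. simpl. rewrite app_nil_r. reflexivity. Qed.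

Definition reached (n : nat) (coins : nat -> bool) (j k : nat) (cf : config) : Prop :=
  let done := firstn k (round_sched n) in
  (forall i, i < n -> pst cf i = round_state i j (coins j) (occ done i)) /\
  hist cf = erase (run_ann n coins j ++ sched_ann n j (coins j) [] done) /\
  nflips cf = j + (if 3 <=? occ done 0 then 1 else 0).

Lemma reached_step n coins j k cf : 2 <= n -> k < period n -> reached n coins j k cf ->
  let p := nth k (round_sched n) 0 in
  reached n coins j (S k) (step coins cf (p, adv_response cf p)).
Proof.
  intros Hn Hk (Hst & Hh & Hf) p. unfold period in Hk.
  pose proof (sched_lt n k Hn) as Hp. fold p in Hp.
  set (s := occ (firstn k (round_sched n)) p).
  assert (HS : forall i, occ (firstn (S k) (round_sched n)) i =
                 occ (firstn k (round_sched n)) i + (if Nat.eq_dec p i then 1 else 0))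
    by (intros; apply occ_firstn_S; auto).
  assert (Hs : s < round_steps p).
  { pose proof (occ_firstn_le (round_sched n) (S k) p) as Hle.
    rewrite HS, occ_round_sched in Hle by auto. destruct (Nat.eq_dec p p); [lia|congruence]. }
  rewrite (step_round_state n coins cf p j (coins j) s); auto.
  2: { intros H2 H1. rewrite Hst by lia. f_equal. apply occ_p0_at_reader_return; auto. }
  2: { intros -> H2. rewrite Hf. unfold s in H2. rewrite H2, Nat.add_0_r. reflexivity. }
  split; [|split]; cbn [pst hist nflips].
  - intros i Hi. unfold upd. rewrite HS.
    destruct (Nat.eqb_spec i p) as [->|Hne].
    + destruct (Nat.eq_dec p p); [|congruence]. f_equal. unfold s. lia.
    + destruct (Nat.eq_dec p i); [congruence|]. rewrite Nat.add_0_r. auto.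
  - rewrite Hh, firstn_S_nth, sched_ann_snoc, app_assoc, !erase_app by auto. reflexivity.
  - rewrite Hf, HS. unfold s.
    destruct (Nat.eqb_spec p 0) as [->|Hne].
    + destruct (Nat.eq_dec 0 0); [|congruence].
      destruct (Nat.eqb_spec (occ (firstn k (round_sched n)) 0) 2) as [->|]; [simpl; lia|].
      destruct (Nat.leb_spec 3 (occ (firstn k (round_sched n)) 0)),
        (Nat.leb_spec 3 (occ (firstn k (round_sched n)) 0 + 1)); simpl; lia.
    + destruct (Nat.eq_dec p 0); [congruence|]. rewrite Nat.add_0_r. reflexivity.
Qed.

Lemma reached_next_round n coins j cf : 0 < n ->
  reached n coins j (period n) cf -> reached n coins (S j) 0 cf.
Proof.
  unfold reached, period. rewrite firstn_all. intros Hn (Hst & Hh & Hf). split; [|split].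
  - intros i Hi. rewrite Hst, occ_round_sched by auto. destruct i as [|[|i]]; reflexivity.
  - rewrite Hh. simpl. rewrite app_nil_r. reflexivity.
  - rewrite Hf, occ_round_sched by auto. simpl. lia.
Qed.

Lemma length_trace adv coins t : length (trace adv coins t) = S t.
Proof. induction t; simpl; auto. Qed.

Lemma cfg_at_S adv coins t :
  cfg_at adv coins (S t) = step coins (cfg_at adv coins t) (adv (trace adv coins t)).
Proof. reflexivity. Qed.

Lemma adv_trace n coins t :
  adv n (trace (adv n) coins t) = (sched n t, adv_response (cfg_at (adv n) coins t) (sched n t)).
Proof. unfold adv. rewrite length_trace, Nat.sub_1_r. reflexivity. Qed.

Lemma period_pos n : 0 < period n.
Proof. unfold period, round_sched, opening. rewrite !length_app. simpl. lia. Qed.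

Lemma sched_period n j k : k < period n -> sched n (j * period n + k) = nth k (round_sched n) 0.
Proof.
  intros Hk. unfold sched. rewrite Nat.add_comm, Nat.Div0.mod_add, Nat.mod_small; auto.
Qed.

Lemma reached_all n coins : 2 <= n -> forall j k, k <= period n ->
  reached n coins j k (cfg_at (adv n) coins (j * period n + k)).
Proof.
  intros Hn j. induction j as [|j IHj]; intros k; induction k as [|k IHk]; intros Hk.
  - split; [|split]; [intros [|[|i]] Hi| |]; reflexivity.
  - rewrite Nat.add_succ_r, cfg_at_S, adv_trace, sched_period by lia.
    apply reached_step; [auto|lia|apply IHk; lia].
  - rewrite Nat.add_0_r, Nat.mul_succ_l. apply reached_next_round; [lia|apply IHj; auto].
  - rewrite Nat.add_succ_r, cfg_at_S, adv_trace, sched_period by lia.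
    apply reached_step; [auto|lia|apply IHk; lia].
Qed.

Lemma round_state_not_done p j b s : round_state p j b s <> Ready PDone.
Proof.
  destruct p as [|[|p]];
    [destruct s as [|[|[|[|[|[|[|s]]]]]]]|destruct s as [|[|[|[|s]]]]
    |destruct s as [|[|[|[|[|[|[|[|s]]]]]]]]]; discriminate.
Qed.

Lemma round_of_round_start p j b : round_of (round_state p j b 0) = Some j.
Proof. destruct p as [|[|p]]; reflexivity. Qed.

Lemma reached_at_any_time n coins t : 2 <= n ->
  exists j k, reached n coins j k (cfg_at (adv n) coins t).
Proof.
  intros Hn. pose proof (period_pos n) as Hp.
  assert (Ht : t / period n * period n + t mod period n = t)
    by (rewrite Nat.mul_comm, <- Nat.div_mod_eq; reflexivity).
  pose proof (reached_all n coins Hn (t / period n) (t mod period n)) as H.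
  rewrite Ht in H. exists (t / period n), (t mod period n).
  apply H. pose proof (Nat.mod_upper_bound t (period n)). lia.
Qed.

(** * Linearizability of the registers along the run *)

Definition reader_phase (r j : nat) (b : bool) (c m : nat) : list item :=
  flat_map (reader_ann r j b) (seq c m).

Lemma sched_ann_repeat n j b r m pre : 2 <= r ->
  sched_ann n j b pre (repeat r m) = reader_phase r j b (occ pre r) m.
Proof.
  intros Hr. revert pre. induction m as [|m IH]; intros pre; [reflexivity|].
  cbn [repeat sched_ann]. rewrite IH, count_occ_app, count_occ_cons_eq, Nat.add_1_r by auto.
  destruct r as [|[|r]]; [lia|lia|reflexivity].
Qed.

Lemma sched_ann_reader_blocks n j b c m l : NoDup l -> forall pre,
  (forall r, In r l -> 2 <= r /\ occ pre r = c) ->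
  sched_ann n j b pre (flat_map (fun r => repeat r m) l) =
  flat_map (fun r => reader_phase r j b c m) l.
Proof.
  induction l as [|r l IH]; intros Hnd pre Hl; [reflexivity|].
  apply NoDup_cons_iff in Hnd as [Hr Hnd]. destruct (Hl r (or_introl eq_refl)) as [Hr2 Hrc].
  cbn [flat_map]. rewrite sched_ann_app, sched_ann_repeat, Hrc by auto. f_equal.
  apply IH; auto. intros r' Hr'. destruct (Hl r' (or_intror Hr')) as [Hr'2 Hr'c].
  split; auto. rewrite count_occ_app, Hr'c, count_occ_repeat_neq; [lia|].
  intros ->. contradiction.
Qed.

Lemma flat_map_singleton {A} (l : list A) : flat_map (fun x => [x]) l = l.
Proof. induction l as [|x l IH]; simpl; congruence. Qed.

Lemma round_ann_closed n j b : round_ann n j b =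
  p0_ann n j b 0 ++ p1_ann j 0 ++ flat_map (fun r => reader_phase r j b 0 1) (readers n) ++
  p0_ann n j b 1 ++ p1_ann j 1 ++ p0_ann n j b 3 ++
  flat_map (fun r => reader_phase r j b 1 7) (readers n) ++
  p0_ann n j b 4 ++ p0_ann n j b 5 ++ p0_ann n j b 6 ++ p1_ann j 2 ++ p1_ann j 3.
Proof.
  assert (Hrd : forall r, In r (readers n) -> 2 <= r < n) by (intros r; apply readers_spec).
  unfold round_ann, round_sched, opening, reader_blocks, closing.
  rewrite <- (flat_map_singleton (readers n)) at 1.
  change (fun x : nat => [x]) with (fun r : nat => repeat r 1).
  rewrite !sched_ann_app, (sched_ann_reader_blocks n j b 0 1), (sched_ann_reader_blocks n j b 1 7);
    try apply seq_NoDup.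
  - cbn [sched_ann]. change (fun r : nat => repeat r 1) with (fun x : nat => [x]).
    rewrite !flat_map_singleton, !count_occ_app, !occ_repeat_blocks, !occ_readers. simpl.
    rewrite ?app_nil_r, <- ?app_assoc. reflexivity.
  - intros r Hr. specialize (Hrd r Hr). split; [lia|].
    change (fun r : nat => repeat r 1) with (fun x : nat => [x]).
    rewrite flat_map_singleton, !count_occ_app, occ_readers.
    destruct r as [|[|r]]; [lia|lia|]. destruct (Nat.ltb_spec (S (S r)) n); [reflexivity|lia].
  - intros r Hr. specialize (Hrd r Hr). split; [lia|].
    destruct r as [|[|r]]; [lia|lia|reflexivity].
Qed.

Definition reg_items (r : reg) (a : list item) : list item :=
  filter (fun it => if reg_eq_dec (item_reg it) r then true else false) a.

Definition kind_items (K : regkind) (a : list item) : list item :=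
  filter (fun it => if regkind_eq_dec (fst (item_reg it)) K then true else false) a.

Lemma reg_items_app r a b : reg_items r (a ++ b) = reg_items r a ++ reg_items r b.
Proof. apply filter_app. Qed.

Lemma kind_items_app K a b : kind_items K (a ++ b) = kind_items K a ++ kind_items K b.
Proof. apply filter_app. Qed.

Lemma kind_items_flat_map K (f : nat -> list item) l :
  kind_items K (flat_map f l) = flat_map (fun x => kind_items K (f x)) l.
Proof. induction l as [|x l IH]; auto. simpl. rewrite kind_items_app, IH. reflexivity. Qed.

Lemma markers_flat_map (f : nat -> list item) l :
  markers (flat_map f l) = flat_map (fun x => markers (f x)) l.
Proof. induction l as [|x l IH]; auto. simpl. rewrite markers_app, IH. reflexivity. Qed.

Lemma opstate_from_others s p a :
  Forall (fun it => item_proc it <> p) a -> opstate_from s p a = s.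
Proof.
  intros H. revert s. induction H as [|it a Hit H IH]; intros s; auto.
  unfold opstate_from in *. simpl. unfold opstate_step at 2.
  destruct (Nat.eqb_spec (item_proc it) p); [contradiction|auto].
Qed.

Lemma opstate_flat_map s p (g : nat -> list item) l :
  NoDup l -> (forall r, Forall (fun it => item_proc it = r) (g r)) ->
  opstate_from s p (flat_map g l) = if in_dec Nat.eq_dec p l then opstate_from s p (g p) else s.
Proof.
  intros Hnd Hg. revert s. induction Hnd as [|r l Hr Hnd IH]; intros s; auto.
  cbn [flat_map]. rewrite opstate_from_app.
  destruct (Nat.eq_dec r p) as [<-|Hne].
  - rewrite opstate_from_others.
    + destruct (in_dec Nat.eq_dec r (r :: l)) as [|[]]; [reflexivity|now left].
    + apply Forall_flat_map, Forall_forall. intros r' Hr'.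
      eapply Forall_impl; [|apply Hg]. intros it ->. intros <-. contradiction.
  - rewrite (opstate_from_others s p (g r)), IH.
    + destruct (in_dec Nat.eq_dec p (r :: l)) as [[E|Hin]|Hnin];
        destruct (in_dec Nat.eq_dec p l); try contradiction; auto.
      exfalso. auto using in_cons.
    + eapply Forall_impl; [|apply Hg]. intros it ->. auto.
Qed.

Lemma kind_items_Forall (P : item -> Prop) K a : Forall P a -> Forall P (kind_items K a).
Proof. intros H. apply incl_Forall with a; [apply incl_filter|exact H]. Qed.

Lemma reader_phase_proc r j b c m : Forall (fun it => item_proc it = r) (reader_phase r j b c m).
Proof.
  apply Forall_flat_map, Forall_forall. intros s _.
  destruct s as [|[|[|[|[|[|[|[|s]]]]]]]]; repeat constructor.
Qed.

Lemma well_annotated_round n j b K : well_annotated (kind_items K (round_ann n j b)).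
Proof.
  intros p. rewrite round_ann_closed. cbn [p0_ann]. unfold r1_lin.
  destruct b; rewrite !kind_items_app, !kind_items_flat_map, !opstate_from_app;
  rewrite !opstate_flat_map; try apply seq_NoDup;
    try (intros r; apply kind_items_Forall; first [apply reader_phase_proc | repeat constructor]).
  all: destruct (in_dec Nat.eq_dec p (readers n)) as [Hp|Hp]; rewrite readers_spec in Hp.
  all: destruct p as [|[|q]]; try lia; destruct K;
    simpl; unfold opstate_step; simpl; rewrite ?Nat.eqb_refl; simpl; discriminate.
Qed.

Lemma flat_map_nil {A B} (l : list A) : flat_map (fun _ => @nil B) l = [].
Proof. induction l; auto. Qed.

Lemma seq_legal_reads v l rest : seq_legal v rest ->
  seq_legal v (flat_map (fun _ : nat => [(ORead, RVal v)]) l ++ rest).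
Proof. intros H. induction l; simpl; auto. Qed.

Lemma seq_legal_writes v w l rest : l <> [] -> seq_legal w rest ->
  seq_legal v (flat_map (fun _ : nat => [(OWrite w, RAck)]) l ++ rest).
Proof.
  intros Hl H. destruct l as [|r l]; [congruence|]. simpl. split; auto. clear r Hl.
  induction l as [|r l IH]; simpl; [|split]; auto.
Qed.

Lemma readers_nonempty n : 3 <= n -> readers n <> [].
Proof. intros Hn. unfold readers. destruct (n - 2) eqn:E; [lia|discriminate]. Qed.

Lemma seq_legal_round n j b K : 3 <= n ->
  seq_legal (init_val (K, j)) (markers (kind_items K (round_ann n j b))).
Proof.
  intros Hn. rewrite round_ann_closed. cbn [p0_ann]. unfold r1_lin.
  destruct b, K; rewrite !kind_items_app, !kind_items_flat_map, !markers_app, !markers_flat_map;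
    simpl; rewrite ?flat_map_nil, <- ?app_assoc; simpl.
  all: repeat first [ exact I | split; [reflexivity|] | apply seq_legal_reads
                    | apply seq_legal_writes; [apply readers_nonempty; auto|] ].
Qed.

Lemma proj_erase r a : proj r (erase a) = erase (reg_items r a).
Proof.
  induction a as [|[e|p r' o x] a IH]; auto; simpl; unfold proj in *; simpl.
  - destruct (reg_eq_dec (ev_reg e) r); simpl; rewrite IH; reflexivity.
  - destruct (reg_eq_dec r' r); auto.
Qed.

Lemma step_ann_in_round n p j b s : Forall (fun it => snd (item_reg it) = j) (step_ann n p j b s).
Proof.
  destruct p as [|[|p]].
  - destruct s as [|[|[|[|[|[|[|s]]]]]]]; simpl; repeat constructor.
    unfold r1_lin. apply Forall_app. split; [destruct b|repeat constructor].
    all: rewrite !Forall_app, Forall_flat_map; repeat split; repeat constructor.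
    all: apply Forall_forall; repeat constructor.
  - destruct s as [|[|[|[|s]]]]; simpl; repeat constructor.
  - destruct s as [|[|[|[|[|[|[|[|s]]]]]]]]; simpl; repeat constructor.
Qed.

Lemma sched_ann_in_round n j b pre l :
  Forall (fun it => snd (item_reg it) = j) (sched_ann n j b pre l).
Proof.
  revert pre. induction l as [|p l IH]; intros pre; simpl; auto.
  apply Forall_app. split; auto using step_ann_in_round.
Qed.

Lemma reg_items_on_round K j0 j a : Forall (fun it => snd (item_reg it) = j) a ->
  reg_items (K, j0) a = if j0 =? j then kind_items K a else [].
Proof.
  induction 1 as [|it a Hit Ha IH]; [destruct (j0 =? j); reflexivity|].
  unfold reg_items, kind_items in *. cbn [filter]. rewrite IH.
  destruct (item_reg it) as [K' j'] eqn:E. cbn [fst snd] in *. subst j'.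
  destruct (reg_eq_dec (K', j) (K, j0)) as [Heq|Hne].
  - injection Heq as -> ->. rewrite Nat.eqb_refl.
    destruct (regkind_eq_dec K K); [reflexivity|congruence].
  - destruct (Nat.eqb_spec j0 j) as [->|]; [|reflexivity].
    destruct (regkind_eq_dec K' K) as [->|]; [congruence|reflexivity].
Qed.

Lemma reg_items_run_ann n coins K j0 j : reg_items (K, j0) (run_ann n coins j) =
  if j0 <? j then kind_items K (round_ann n j0 (coins j0)) else [].
Proof.
  induction j as [|j IH]; auto. simpl.
  rewrite reg_items_app, IH, (reg_items_on_round K j0 j) by apply sched_ann_in_round.
  destruct (Nat.ltb_spec j0 j), (Nat.eqb_spec j0 j), (Nat.ltb_spec j0 (S j));
    subst; try lia; rewrite ?app_nil_r; reflexivity.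
Qed.

Lemma reg_items_prefix n coins K j0 j k : exists rest,
  reg_items (K, j0) (run_ann n coins j ++ sched_ann n j (coins j) [] (firstn k (round_sched n)))
    ++ rest = kind_items K (round_ann n j0 (coins j0)).
Proof.
  rewrite reg_items_app, reg_items_run_ann, (reg_items_on_round K j0 j) by apply sched_ann_in_round.
  destruct (Nat.ltb_spec j0 j), (Nat.eqb_spec j0 j); subst; try lia.
  - exists []. rewrite !app_nil_r. reflexivity.
  - exists (kind_items K
              (sched_ann n j (coins j) (firstn k (round_sched n)) (skipn k (round_sched n)))).
    rewrite app_nil_l, <- kind_items_app, <- sched_ann_app, firstn_skipn. reflexivity.
  - exists (kind_items K (round_ann n j0 (coins j0))). reflexivity.
Qed.

Lemma regs_linearizable_reached n coins j k : 3 <= n ->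
  regs_linearizable
    (erase (run_ann n coins j ++ sched_ann n j (coins j) [] (firstn k (round_sched n)))).
Proof.
  intros Hn [K j0]. rewrite proj_erase.
  destruct (reg_items_prefix n coins K j0 j k) as [rest Hrest].
  apply linearizable_erase.
  - apply well_annotated_app_l with rest. rewrite Hrest. apply well_annotated_round.
  - apply seq_legal_app_l with (markers rest). rewrite <- markers_app, Hrest.
    apply seq_legal_round; auto.
Qed.

Theorem theorem1 (n : nat) (Hn : 3 <= n) :
  exists adv : adversary,
    forall coins : nat -> bool,
      (* only processes p_0..p_{n-1} are scheduled *)
      (forall t, fst (adv (trace adv coins t)) < n) /\
      (* the registers behave as linearizable registers *)
      (forall t, regs_linearizable (hist (cfg_at adv coins t))) /\
      (* every process executes infinitely many rounds *)
      (forall i, i < n -> forall J, exists t j,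
          round_of (pst (cfg_at adv coins t) i) = Some j /\ J <= j) /\
      (* hence no process ever reaches a return statement *)
      (forall i t, i < n -> pst (cfg_at adv coins t) i <> Ready PDone).
Proof.
  exists (adv n). intros coins. split; [|split; [|split]].
  - intros t. rewrite adv_trace. apply sched_lt. lia.
  - intros t. destruct (reached_at_any_time n coins t ltac:(lia)) as (j & k & _ & Hh & _).
    rewrite Hh. apply regs_linearizable_reached; auto.
  - intros i Hi J. exists (J * period n), J.
    destruct (reached_all n coins ltac:(lia) J 0) as [Hst _]; [lia|].
    rewrite Nat.add_0_r in Hst. rewrite Hst by auto. auto using round_of_round_start.
  - intros i t Hi. destruct (reached_at_any_time n coins t ltac:(lia)) as (j & k & Hst & _).
    rewrite Hst by auto. apply round_state_not_done.
Qed.
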